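(* Let $K_{n,m}$ be a nice complete bipartite graph with $K_{n,m}\ne K_{2,2}$. Then $\chi'_{qm\Sigma}(K_{n,m})=2$ if $n\ne m$, and $\chi'_{qm\Sigma}(K_{n,m})=3$ if $n=m$.
   Context: A $k$-edge-coloring of $G$ is any map $c:E(G)\to\{1,\dots,k\}$ (adjacent edges may share colors). It induces $\sigma_c(v)=\sum_{u\in N(v)}c(vu)$. The coloring is neighbor sum distinguishing (NSD) if $\sigma_c(u)\ne\sigma_c(v)$ for every edge $uv$. It is quasi-majority if every vertex $v$ is incident to at most $\lceil d(v)/2\rceil$ edges of each single color. $\chi'_{qm\Sigma}(G)$ denotes the least $k$ such that $G$ has a $k$-edge-coloring that is both quasi-majority and NSD. A graph is nice if it has no connected component isomorphic to $K_2$. *)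

From mathcomp Require Import all_boot.
Set Implicit Arguments. Unset Strict Implicit. Unset Printing Implicit Defensive.

Definition simple_graph (T : finType) (e : rel T) : Prop :=
  (forall x y, e x y = e y x) /\ (forall x, ~~ e x x).

Definition deg (T : finType) (e : rel T) (v : T) : nat := #|[set u | e v u]|.

(* A graph is nice if no connected component is isomorphic to K_2, i.e. there
   is no edge uv whose two endpoints both have degree 1. *)
Definition nice (T : finType) (e : rel T) : Prop :=
  forall u v, e u v -> ~ (deg e u = 1 /\ deg e v = 1).

(* A k-edge-colouring: a colour c u v = c v u in {1,...,k} for every edge uv
   (values of c on non-edges are irrelevant). *)
Definition edge_coloring (T : finType) (e : rel T) (k : nat) (c : T -> T -> nat) : Prop :=
  forall u v, e u v -> c u v = c v u /\ 1 <= c u v <= k.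

Definition sigma (T : finType) (e : rel T) (c : T -> T -> nat) (v : T) : nat :=
  \sum_(u | e v u) c v u.

Definition nsd (T : finType) (e : rel T) (c : T -> T -> nat) : Prop :=
  forall u v, e u v -> sigma e c u <> sigma e c v.

Definition quasi_majority (T : finType) (e : rel T) (c : T -> T -> nat) : Prop :=
  forall (v : T) (a : nat), #|[set u | e v u & c v u == a]| <= uphalf (deg e v).

Definition has_qm_nsd_coloring (T : finType) (e : rel T) (k : nat) : Prop :=
  exists c, [/\ edge_coloring e k c, quasi_majority e c & nsd e c].

Definition chi_qmS_is (T : finType) (e : rel T) (k : nat) : Prop :=
  has_qm_nsd_coloring e k /\ forall k', has_qm_nsd_coloring e k' -> k <= k'.

Definition Knm_rel (n m : nat) : rel ('I_n + 'I_m)%type :=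
  fun x y => match x, y with
             | inl _, inr _ => true
             | inr _, inl _ => true
             | _, _ => false
             end.
Arguments Knm_rel : clear implicits.

From mathcomp Require Import all_boot zify.

Set Implicit Arguments.
Unset Strict Implicit.
Unset Printing Implicit Defensive.

(** Lower bounds: one colour violates quasi-majority at any vertex of degree
    at least 2, and with colours 1 and 2 quasi-majority pins the colour sum of
    a vertex of degree d to d + d/2 rounded down or up. In K_{n,n} the NSD
    condition then makes the colour sum constant on each side, with different
    constants, contradicting the double count n s_left = n s_right.
    Upper bounds: explicit colourings whose rows form two blocks, of sizes
    ceil(n/2) and floor(n/2), with complementary patterns; for n <> m two
    colours suffice because the sets {floor(3n/2), ceil(3n/2)} are pairwise
    disjoint. *)

Section QuasiMajority.

Variables (T : finType) (e : rel T) (c : T -> T -> nat).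

Lemma deg_sum1 v : deg e v = \sum_(u | e v u) 1.
Proof. by rewrite sum1dep_card. Qed.

Lemma card_adj_color v a :
  #|[set u | e v u & c v u == a]| = \sum_(u | e v u) (c v u == a).
Proof. by rewrite -sum1dep_card big_mkcondr; apply: eq_bigr => u _; case: eqP. Qed.

Lemma qm_colors_gt1 k v :
  edge_coloring e k c -> quasi_majority e c -> 1 < deg e v -> 1 < k.
Proof.
move=> ec qm dv; rewrite ltnNge; apply/negP => k1.
have := qm v 1; rewrite card_adj_color (eq_bigr (fun=> 1)) -?deg_sum1; first lia.
by move=> u /ec[_ /andP[c1 ck]]; have -> : c v u = 1 by lia.
Qed.

Lemma qm_2coloring_sigma_bounds v :
  edge_coloring e 2 c -> quasi_majority e c ->
  deg e v + (deg e v)./2 <= sigma e c v <= deg e v + uphalf (deg e v).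
Proof.
move=> ec qm.
have c12 u : e v u -> c v u = 1 + (c v u == 2) /\ 1 = (c v u == 1) + (c v u == 2).
  by case/ec=> _; case: (c v u) => [|[|[|]]].
have sigmaE : sigma e c v = deg e v + \sum_(u | e v u) (c v u == 2).
  by rewrite /sigma deg_sum1 -big_split; apply: eq_bigr => u /c12[].
have degE : deg e v = \sum_(u | e v u) (c v u == 1) + \sum_(u | e v u) (c v u == 2).
  by rewrite deg_sum1 -big_split; apply: eq_bigr => u /c12[].
by have := qm v 1; have := qm v 2; rewrite !card_adj_color; lia.
Qed.

End QuasiMajority.

Section CompleteBipartite.

Variables n m : nat.

Local Notation K := (Knm_rel n m).

Lemma big_Knm_inl (F : 'I_n + 'I_m -> nat) i :
  \sum_(u | K (inl i) u) F u = \sum_(j < m) F (inr j).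
Proof. by rewrite big_sumType /= big_pred0_eq add0n. Qed.

Lemma big_Knm_inr (F : 'I_n + 'I_m -> nat) j :
  \sum_(u | K (inr j) u) F u = \sum_(i < n) F (inl i).
Proof. by rewrite big_sumType /= big_pred0_eq addn0. Qed.

Lemma deg_Knm_inl i : deg K (inl i) = m.
Proof. by rewrite deg_sum1 big_Knm_inl sum_nat_const card_ord muln1. Qed.

Lemma deg_Knm_inr j : deg K (inr j) = n.
Proof. by rewrite deg_sum1 big_Knm_inr sum_nat_const card_ord muln1. Qed.

Lemma nice_Knm : 0 < n -> 0 < m -> nice K -> (1 < n) || (1 < m).
Proof.
move=> n0 m0 Knice; case: ltnP => //= n1; rewrite ltnNge; apply/negP => m1.
apply: (Knice (inl (Ordinal n0)) (inr (Ordinal m0)) erefl).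
by rewrite deg_Knm_inl deg_Knm_inr; lia.
Qed.

Lemma Knm_colors_gt1 k : 0 < n -> 0 < m -> (1 < n) || (1 < m) ->
  has_qm_nsd_coloring K k -> 1 < k.
Proof.
move=> n0 m0 /orP[n1|m1] [c [ec qm _]].
- by apply: (qm_colors_gt1 (v := inr (Ordinal m0)) ec qm); rewrite deg_Knm_inr.
- by apply: (qm_colors_gt1 (v := inl (Ordinal n0)) ec qm); rewrite deg_Knm_inl.
Qed.

Lemma sum_sigma_Knm k c : edge_coloring K k c ->
  \sum_(i < n) sigma K c (inl i) = \sum_(j < m) sigma K c (inr j).
Proof.
move=> ec; rewrite /sigma.
under eq_bigr do rewrite big_Knm_inl.
under [RHS]eq_bigr do rewrite big_Knm_inr.
rewrite exchange_big; apply: eq_bigr => j _; apply: eq_bigr => i _.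
by case: (ec (inl i) (inr j) erefl).
Qed.

Definition matrix_coloring (f : nat -> nat -> nat) (u v : 'I_n + 'I_m) : nat :=
  match u, v with
  | inl i, inr j | inr j, inl i => f i j
  | _, _ => 0
  end.

Lemma matrix_coloring_qm_nsd k (f : nat -> nat -> nat) :
  (forall (i : 'I_n) (j : 'I_m), 1 <= f i j <= k) ->
  (forall (i : 'I_n) a, \sum_(j < m) (f i j == a) <= uphalf m) ->
  (forall (j : 'I_m) a, \sum_(i < n) (f i j == a) <= uphalf n) ->
  (forall (i : 'I_n) (j : 'I_m), \sum_(j' < m) f i j' <> \sum_(i' < n) f i' j) ->
  has_qm_nsd_coloring K k.
Proof.
move=> f_range row_qm col_qm row_col_sum; exists (matrix_coloring f); split.
- by move=> [i|j] [i'|j'] //= _; split => //; apply: f_range.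
- move=> [i|j] a; rewrite card_adj_color ?big_Knm_inl ?big_Knm_inr.
  + by rewrite deg_Knm_inl; apply: row_qm.
  + by rewrite deg_Knm_inr; apply: col_qm.
- move=> [i|j] [i'|j'] //= _; rewrite /sigma ?big_Knm_inl ?big_Knm_inr.
  + exact: row_col_sum.
  + exact/nesym/row_col_sum.
Qed.

End CompleteBipartite.

Lemma Knn_no_qm_nsd_2coloring n : 0 < n -> ~ has_qm_nsd_coloring (Knm_rel n n) 2.
Proof.
move=> n0 [c [ec qm nsd]]; pose i0 : 'I_n := Ordinal n0.
set s : 'I_n + 'I_n -> nat := sigma (Knm_rel n n) c.
have {}nsd u v : Knm_rel n n u v -> s u <> s v := nsd u v.
have s_bounds (v : 'I_n + 'I_n) : n + n./2 <= s v <= n + uphalf n.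
  by have := qm_2coloring_sigma_bounds v ec qm; case: v => v;
    rewrite ?deg_Knm_inl ?deg_Knm_inr.
(* [s] takes at most two values and differs across every edge. *)
have s_inl i : s (inl i) = s (inl i0).
  have := nsd (inl i) (inr i0) erefl; have := nsd (inl i0) (inr i0) erefl.
  have := s_bounds (inl i); have := s_bounds (inl i0).
  by have := s_bounds (inr i0); lia.
have s_inr j : s (inr j) = s (inr i0).
  have := nsd (inl i0) (inr j) erefl; have := nsd (inl i0) (inr i0) erefl.
  have := s_bounds (inr j); have := s_bounds (inl i0).
  by have := s_bounds (inr i0); lia.
apply: (nsd (inl i0) (inr i0) erefl); apply/eqP.
have := sum_sigma_Knm ec; rewrite -/s (eq_bigr _ (fun i _ => s_inl i)).
rewrite (eq_bigr _ (fun j _ => s_inr j)) !sum_nat_const card_ord => /eqP.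
by rewrite eqn_pmul2l.
Qed.

Lemma sum_ord_ltn_if (F : nat -> nat) h n x y : h <= n ->
  \sum_(j < n) F (if j < h then x else y) = h * F x + (n - h) * F y.
Proof.
move=> hn; rewrite -(big_mkord xpredT (fun j => F (if j < h then x else y))).
rewrite (big_cat_nat (n := h)) //= (eq_big_nat _ _ (F2 := fun=> F x)).
  rewrite [X in _ + X](eq_big_nat _ _ (F2 := fun=> F y)).
    by rewrite !sum_nat_const_nat subn0.
  by move=> j /andP[hj _]; rewrite ltnNge hj.
by move=> j /andP[_ ->].
Qed.

Lemma sum_ord_ltn_eq_if (F : nat -> nat) t n x y z : t < n ->
  \sum_(j < n) F (if j < t then x else if j == t :> nat then y else z) =
  t * F x + F y + (n - t.+1) * F z.
Proof.
move=> tn; have tn' := ltnW tn.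
rewrite -(big_mkord xpredT (fun j => F (if j < t then x else if j == t then y else z))).
rewrite (big_cat_nat (n := t)) //= [X in _ + X](big_cat_nat (n := t.+1)) //=.
rewrite big_nat1 ltnn eqxx (eq_big_nat _ _ (F2 := fun=> F x)).
  rewrite [X in _ + (_ + X)](eq_big_nat _ _ (F2 := fun=> F z)).
    by rewrite !sum_nat_const_nat subn0 addnA.
  by move=> j /andP[hj _]; rewrite ltnNge ltnW // gtn_eqF.
by move=> j /andP[_ ->].
Qed.

Definition row_blocks (h : nat) (P Q : nat -> nat) (i j : nat) : nat :=
  if i < h then P j else Q j.

Lemma row_blocks_qm_nsd n m k (P Q : nat -> nat) :
  (forall j : 'I_m, [/\ 1 <= P j <= k, 1 <= Q j <= k & P j != Q j]) ->
  (forall a, \sum_(j < m) (P j == a) <= uphalf m) ->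
  (forall a, \sum_(j < m) (Q j == a) <= uphalf m) ->
  (forall j : 'I_m, \sum_(j' < m) P j' <> uphalf n * P j + n./2 * Q j /\
                    \sum_(j' < m) Q j' <> uphalf n * P j + n./2 * Q j) ->
  has_qm_nsd_coloring (Knm_rel n m) k.
Proof.
move=> PQ_range P_qm Q_qm PQ_sum; have un : uphalf n <= n by lia.
have col_sum (F : nat -> nat) (j : nat) :
    \sum_(i < n) F (row_blocks (uphalf n) P Q i j) = uphalf n * F (P j) + n./2 * F (Q j).
  by rewrite sum_ord_ltn_if //; congr (_ + _ * _); lia.
apply: (matrix_coloring_qm_nsd (f := row_blocks (uphalf n) P Q)).
- by move=> i j; rewrite /row_blocks; case: ifP => _; case: (PQ_range j).
- by move=> i a; rewrite /row_blocks; case: (i < uphalf n).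
- move=> j a; rewrite (col_sum (fun v => v == a : nat)).
  have [_ _ PQ] := PQ_range j; case: eqP => [Pa|_] /=; last lia.
  by rewrite -Pa eq_sym (negPf PQ); lia.
- move=> i j; rewrite (col_sum id) /row_blocks.
  by case: (i < uphalf n); case: (PQ_sum j).
Qed.

Lemma Knm_qm_nsd_2coloring n m : n != m -> has_qm_nsd_coloring (Knm_rel n m) 2.
Proof.
move=> nm; have um : uphalf m <= m by lia.
apply: (@row_blocks_qm_nsd _ _ _
  (fun j => if j < uphalf m then 1 else 2) (fun j => if j < uphalf m then 2 else 1)).
- by move=> j; case: ifP.
- by move=> a; rewrite (sum_ord_ltn_if (fun v => v == a : nat)) //;
    case: a => [|[|[|a]]] /=; lia.
- by move=> a; rewrite (sum_ord_ltn_if (fun v => v == a : nat)) //;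
    case: a => [|[|[|a]]] /=; lia.
- by move=> j; rewrite !(sum_ord_ltn_if (fun v => v)) //; case: ifP => _; lia.
Qed.

Lemma Knn_qm_nsd_3coloring n : 2 < n -> has_qm_nsd_coloring (Knm_rel n n) 3.
Proof.
move=> n2; pose t := (uphalf n).-1; have tn : t < n by lia.
apply: (@row_blocks_qm_nsd _ _ _
  (fun j => if j < t then 1 else if j == t then 2 else 3)
  (fun j => if j < t then 2 else if j == t then 3 else 1)).
- by move=> j; case: ifP => _; [|case: ifP].
- by move=> a; rewrite (sum_ord_ltn_eq_if (fun v => v == a : nat)) //;
    case: a => [|[|[|[|a]]]] /=; lia.
- by move=> a; rewrite (sum_ord_ltn_eq_if (fun v => v == a : nat)) //;
    case: a => [|[|[|[|a]]]] /=; lia.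
- by move=> j; rewrite !(sum_ord_ltn_eq_if (fun v => v)) //;
    case: ifP => _; [|case: ifP => _]; lia.
Qed.

Theorem mainTheorem5 (n m : nat) :
  1 <= n -> 1 <= m ->
  nice (Knm_rel n m) ->
  ~ (n = 2 /\ m = 2) ->
  chi_qmS_is (Knm_rel n m) (if n == m then 3 else 2).
Proof.
move=> n0 m0 Knice not_K22; have n1_m1 := nice_Knm n0 m0 Knice.
have [n_eq_m|nm] := eqVneq n m.
- subst m; have n2 : 2 < n by rewrite orbb in n1_m1; lia.
  split; first exact: Knn_qm_nsd_3coloring.
  move=> k col; rewrite ltnNge; apply/negP => k2.
  have k_eq2 : k = 2 by have := Knm_colors_gt1 n0 n0 n1_m1 col; lia.
  by apply: (Knn_no_qm_nsd_2coloring n0); rewrite -k_eq2.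
- split; first exact: Knm_qm_nsd_2coloring.
  by move=> k; apply: Knm_colors_gt1.
Qed.
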